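(* Consider minibatch SGD with momentum $\mu\in[0,1)$ and symmetric positive-definite preconditioning matrix $\Lambda$ on linear regression with label noise, in the limit $N\to\infty$, and assume $[\Lambda,A]:=\Lambda A-A\Lambda=0$. Define $G_\mu:=2(1-\mu)I_D-\left(\frac{1-\mu}{1+\mu}+\frac1S\right)\Lambda A$ and $\kappa_\mu:=\frac{\mathrm{Tr}[\Lambda AG_\mu^{-1}]}{1-\frac1S\mathrm{Tr}[\Lambda AG_\mu^{-1}]}$ (with $G_\mu$ invertible and the denominator nonzero). Then the asymptotic fluctuation of the parameters is $$\Sigma=\frac{\sigma^2}{S}\left(1+\frac{\kappa_\mu}{S}\right)\Lambda G_\mu^{-1}.$$
   Context: Data: $x_i\in\mathbb{R}^D$ i.i.d. $\mathcal N(0,A)$, $A$ symmetric positive definite; $y_i=\mathbf{u}^{\mathrm T}x_i+\epsilon_i$ with $\epsilon_i$ i.i.d., independent of the $x_i$, mean $0$, variance $\sigma^2$; loss $L(\mathbf{w})=\frac{1}{2N}\sum_i(\mathbf{w}^{\mathrm T}x_i-y_i)^2$ (Hessian $H=A$ as $N\to\infty$). SGD with momentum: $\hat{\mathbf{g}}_t=\frac1S\sum_{i\in B_t}\nabla\ell_i(\mathbf{w}_{t-1})$, $\mathbf{m}_t=\mu\mathbf{m}_{t-1}+\hat{\mathbf{g}}_t$, $\mathbf{w}_t=\mathbf{w}_{t-1}-\Lambda\mathbf{m}_t$, with batch size $S$. The asymptotic fluctuation is $\Sigma:=\lim_{t\to\infty}\mathbb{E}[(\mathbf{w}_t-\mathbf{u})(\mathbf{w}_t-\mathbf{u})^{\mathrm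 T}]$; it is characterized by the matrix equation $(1-\mu)(\Lambda H\Sigma+\Sigma H\Lambda)-\frac{1+\mu^2}{1-\mu^2}\Lambda H\Sigma H\Lambda+\frac{\mu}{1-\mu^2}(\Lambda H\Lambda H\Sigma+\Sigma H\Lambda H\Lambda)=\Lambda C\Lambda$ with $H=A$, where $C$ is the stationary averaged minibatch noise covariance, which in this setting equals $C=\frac1S(A\Sigma A+\mathrm{Tr}[A\Sigma]A+\sigma^2A)$. *)

From mathcomp Require Import all_boot all_order all_algebra.
Set Implicit Arguments. Unset Strict Implicit. Unset Printing Implicit Defensive.
Import Order.TTheory GRing.Theory Num.Theory.
Local Open Scope ring_scope.

Section Defs.
Variables (R : realFieldType) (D : nat).

Definition posdef (M : 'M[R]_D) : Prop :=
  M^T = M /\ forall v : 'cV[R]_D, v != 0 -> 0 < (v^T *m M *m v) 0 0.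

Definition G_mu (mu : R) (S : nat) (Lam A : 'M[R]_D) : 'M[R]_D :=
  (2 * (1 - mu))%:M - ((1 - mu) / (1 + mu) + (S%:R)^-1) *: (Lam *m A).

Definition tau_mu (mu : R) (S : nat) (Lam A : 'M[R]_D) : R :=
  \tr (Lam *m A *m invmx (G_mu mu S Lam A)).

Definition kappa_mu (mu : R) (S : nat) (Lam A : 'M[R]_D) : R :=
  tau_mu mu S Lam A / (1 - (S%:R)^-1 * tau_mu mu S Lam A).

(* stationary averaged minibatch noise covariance (N -> oo, label-noise variance sigma2):
   C = (1/S) (A Sigma A + Tr[A Sigma] A + sigma^2 A) *)
Definition noise_cov (S : nat) (A : 'M[R]_D) (sigma2 : R) (Sig : 'M[R]_D) : 'M[R]_D :=
  (S%:R)^-1 *: (A *m Sig *m A + \tr (A *m Sig) *: A + sigma2 *: A).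

(* The matrix equation characterizing the asymptotic fluctuation Sigma,
   with Hessian H = A. *)
Definition fluctuation_eq (mu : R) (S : nat) (Lam A : 'M[R]_D) (sigma2 : R)
    (Sig : 'M[R]_D) : Prop :=
  let H := A in
  (1 - mu) *: (Lam *m H *m Sig + Sig *m H *m Lam)
  - ((1 + mu ^+ 2) / (1 - mu ^+ 2)) *: (Lam *m H *m Sig *m H *m Lam)
  + (mu / (1 - mu ^+ 2)) *: (Lam *m H *m Lam *m H *m Sig + Sig *m H *m Lam *m H *m Lam)
  = Lam *m noise_cov S A sigma2 Sig *m Lam.

End Defs.

From mathcomp Require Import all_boot all_order all_algebra.
From mathcomp Require Import ring lra.
Set Implicit Arguments. Unset Strict Implicit. Unset Printing Implicit Defensive.
Import Order.TTheory GRing.Theory Num.Theory.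
Local Open Scope ring_scope.

(** When [Sigma] commutes with [Lam] and [A], every term of the fluctuation
    equation is a polynomial in [M = Lam A] applied to [Sigma], and the
    equation factors as [M (G_mu Sigma - c Lam) = 0] with the scalar
    [c = (Tr[A Sigma] + sigma^2) / S].  Since [M] is invertible this forces
    [Sigma = c Lam G_mu^-1]; taking the trace of [A Sigma] then gives the
    linear fixed-point equation [c = (c Tr[Lam A G_mu^-1] + sigma^2) / S],
    whose unique solution is the coefficient in the theorem. *)

Lemma posdef_unitmx (R : realFieldType) (D : nat) (A : 'M[R]_D) :
  posdef A -> A \in unitmx.
Proof.
case=> _ A_pos; rewrite unitmxE unitfE; apply/negP => /det0P [v v_neq0 vA].
have vT_neq0 : v^T != 0.
  by apply: contra v_neq0 => /eqP vT0; rewrite -(trmxK v) vT0 trmx0.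
by have := A_pos _ vT_neq0; rewrite trmxK vA mul0mx mxE ltxx.
Qed.

Section CommMx.
Variables (R : comUnitRingType) (n : nat).
Implicit Types f g : 'M[R]_n.

Lemma comm_mxZ f g a : comm_mx f g -> comm_mx f (a *: g).
Proof. by rewrite /comm_mx -scalemxAl -scalemxAr => ->. Qed.

Lemma comm_mx_invmx f g : g \in unitmx -> comm_mx f g -> comm_mx f (invmx g).
Proof.
move=> g_unit fg; rewrite /comm_mx.
by rewrite -{1}(mulKmx g_unit (f *m invmx g)) (mulmxA g) -fg -mulmxA mulmxV // mulmx1.
Qed.

End CommMx.

Lemma affine_fixed_point_iff (F : fieldType) (n t s c : F) :
  n != 0 -> 1 - n^-1 * t != 0 ->
  c = n^-1 * (c * t + s) <-> c = s / n * (1 + t / (1 - n^-1 * t) / n).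
Proof.
move=> n_neq0 den_neq0.
have nt_neq0 : n - t != 0.
  by apply: contra den_neq0 => /eqP/subr0_eq <-; rewrite mulVf // subrr.
rewrite [1 - _](_ : _ = (n - t) / n); last by field.
split=> [c_fix | ->]; last by field; rewrite nt_neq0 n_neq0.
have cn : c * n = c * t + s by rewrite [in LHS]c_fix mulrAC mulVf ?mul1r.
have -> : c = s / (n - t).
  by apply: (mulIf nt_neq0); rewrite mulrBr cn divfK // addrAC subrr add0r.
by field; rewrite nt_neq0 n_neq0.
Qed.

Section Fluctuation.
Variables (R : realFieldType) (D S : nat) (mu sigma2 : R) (A Lam : 'M[R]_D).
Hypotheses (S_gt0 : (0 < S)%N) (mu_ge0 : 0 <= mu) (mu_lt1 : mu < 1).
Hypothesis LamA : comm_mx Lam A.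

Local Notation G := (G_mu mu S Lam A).
Local Notation M := (Lam *m A).
Local Notation tau := (tau_mu mu S Lam A).

Lemma comm_mx_G_mu X : comm_mx X Lam -> comm_mx X A -> comm_mx X G.
Proof.
move=> XLam XA; apply: comm_mxB; first exact: comm_mx_scalar.
exact/comm_mxZ/comm_mxM.
Qed.

Lemma fluctuation_residual Sig : comm_mx Sig A -> comm_mx Sig Lam ->
  (1 - mu) *: (Lam *m A *m Sig + Sig *m A *m Lam)
  - ((1 + mu ^+ 2) / (1 - mu ^+ 2)) *: (Lam *m A *m Sig *m A *m Lam)
  + (mu / (1 - mu ^+ 2)) *: (Lam *m A *m Lam *m A *m Sig + Sig *m A *m Lam *m A *m Lam)
  - Lam *m noise_cov S A sigma2 Sig *m Lam
  = M *m (G *m Sig - (S%:R^-1 * (\tr (A *m Sig) + sigma2)) *: Lam).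
Proof.
move=> SigA SigLam.
have S_neq0 : (S%:R : R) != 0 by rewrite pnatr_eq0 -lt0n.
have mu2_neq1 : 1 - mu ^+ 2 != 0 by apply/eqP; move: mu_ge0 mu_lt1; nra.
have mu_neqN1 : 1 + mu != 0 by apply/eqP; move: mu_ge0; lra.
have SigM : Sig *m A *m Lam = M *m Sig.
  by rewrite SigA -mulmxA SigLam mulmxA -LamA.
have SigMM : Sig *m A *m Lam *m A *m Lam = M *m M *m Sig.
  by rewrite SigM -!mulmxA (mulmxA Sig) SigM !mulmxA.
have MSigM : Lam *m A *m Sig *m A *m Lam = M *m M *m Sig.
  by rewrite -!mulmxA (mulmxA Sig) SigM !mulmxA.
have MMSig : Lam *m A *m Lam *m A *m Sig = M *m M *m Sig by rewrite !mulmxA.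
have noiseE : Lam *m noise_cov S A sigma2 Sig *m Lam =
    S%:R^-1 *: (M *m M *m Sig + \tr (A *m Sig) *: (M *m Lam) + sigma2 *: (M *m Lam)).
  rewrite /noise_cov -scalemxAr -scalemxAl !mulmxDr !mulmxDl -!scalemxAr -!scalemxAl.
  by rewrite !mulmxA MSigM MMSig.
have GE : M *m (G *m Sig) =
    (2 * (1 - mu)) *: (M *m Sig) - ((1 - mu) / (1 + mu) + S%:R^-1) *: (M *m M *m Sig).
  by rewrite /G_mu mulmxBl mulmxBr mul_scalar_mx -!scalemxAl -!scalemxAr !mulmxA.
rewrite noiseE mulmxBr GE -scalemxAr SigMM MSigM MMSig SigM.
(* The momentum terms combine as (1 + mu^2 - 2 mu) / (1 - mu^2) = (1 - mu) / (1 + mu). *)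
apply/matrixP => i j; rewrite !mxE; field.
by rewrite mu2_neq1 mu_neqN1 S_neq0.
Qed.

Hypotheses (M_unit : M \in unitmx) (G_unit : G \in unitmx).

Lemma fluctuation_eq_comm Sig : comm_mx Sig A -> comm_mx Sig Lam ->
  fluctuation_eq mu S Lam A sigma2 Sig <->
  G *m Sig = (S%:R^-1 * (\tr (A *m Sig) + sigma2)) *: Lam.
Proof.
move=> SigA SigLam; have residual := fluctuation_residual SigA SigLam.
split=> [fl_eq | GSig]; last by apply: subr0_eq; rewrite residual GSig subrr mulmx0.
apply: subr0_eq; apply: (can_inj (mulKmx M_unit)).
by rewrite -residual fl_eq subrr mulmx0.
Qed.

Lemma comm_mx_scaled_solution c :
  comm_mx (c *: (Lam *m invmx G)) A /\ comm_mx (c *: (Lam *m invmx G)) Lam.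
Proof.
have GLam : comm_mx Lam G by apply: comm_mx_G_mu.
have GA : comm_mx A G by apply: comm_mx_G_mu; [exact: comm_mx_sym|].
split; apply/comm_mx_sym/comm_mxZ/comm_mxM => //; exact: comm_mx_invmx.
Qed.

Lemma trace_scaled_solution c : \tr (A *m (c *: (Lam *m invmx G))) = c * tau.
Proof. by rewrite -scalemxAr mxtraceZ /tau_mu mulmxA -LamA. Qed.

Lemma fluctuation_eq_scaled c : c = S%:R^-1 * (c * tau + sigma2) ->
  fluctuation_eq mu S Lam A sigma2 (c *: (Lam *m invmx G)).
Proof.
move=> c_fix; have [SigA SigLam] := comm_mx_scaled_solution c.
apply/fluctuation_eq_comm => //; rewrite trace_scaled_solution -c_fix.
have GLam : comm_mx Lam G by apply: comm_mx_G_mu.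
by rewrite -scalemxAr mulmxA -GLam -mulmxA mulmxV // mulmx1.
Qed.

Lemma fluctuation_eq_scaledP Sig : comm_mx Sig A -> comm_mx Sig Lam ->
  fluctuation_eq mu S Lam A sigma2 Sig ->
  exists2 c, c = S%:R^-1 * (c * tau + sigma2) & Sig = c *: (Lam *m invmx G).
Proof.
move=> SigA SigLam /(fluctuation_eq_comm SigA SigLam) GSig.
set c := S%:R^-1 * _ in GSig.
have SigE : Sig = c *: (Lam *m invmx G).
  have GiLam : comm_mx Lam (invmx G) by apply/comm_mx_invmx/comm_mx_G_mu.
  by rewrite -(mulKmx G_unit Sig) GSig -scalemxAr GiLam.
by exists c; rewrite // {1}/c {1}SigE trace_scaled_solution.
Qed.

End Fluctuation.

Theorem theorem1 (R : realFieldType) (D S : nat) (mu sigma2 : R)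
    (A Lam : 'M[R]_D) :
  (0 < S)%N ->
  0 <= mu -> mu < 1 ->
  0 <= sigma2 ->
  posdef A -> posdef Lam ->
  Lam *m A = A *m Lam ->
  G_mu mu S Lam A \in unitmx ->
  1 - (S%:R)^-1 * tau_mu mu S Lam A != 0 ->
  let Sigma := (sigma2 / S%:R * (1 + kappa_mu mu S Lam A / S%:R))
                 *: (Lam *m invmx (G_mu mu S Lam A)) in
  fluctuation_eq mu S Lam A sigma2 Sigma /\
  (forall Sig : 'M[R]_D,
     fluctuation_eq mu S Lam A sigma2 Sig ->
     Sig *m A = A *m Sig -> Sig *m Lam = Lam *m Sig ->
     Sig = Sigma).
Proof.
move=> S_gt0 mu_ge0 mu_lt1 _ A_pos Lam_pos LamA G_unit den_neq0 Sigma.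
have S_neq0 : (S%:R : R) != 0 by rewrite pnatr_eq0 -lt0n.
have M_unit : Lam *m A \in unitmx by rewrite unitmx_mul !posdef_unitmx.
have fixed_pointE c := affine_fixed_point_iff sigma2 c S_neq0 den_neq0.
split=> [|Sig Sig_eq SigA SigLam].
  by apply: fluctuation_eq_scaled => //; apply/fixed_pointE.
have [c c_fix ->] := fluctuation_eq_scaledP S_gt0 mu_ge0 mu_lt1 LamA M_unit G_unit
  SigA SigLam Sig_eq.
by rewrite /Sigma; congr (_ *: _); apply/fixed_pointE.
Qed.
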